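(* Let $G$ be split with root system of type $F_4$, simple roots $\alpha_1,\alpha_2,\alpha_3,\alpha_4$ in Bourbaki labelling ($\alpha_1,\alpha_2$ long, $\alpha_3,\alpha_4$ short), and let $\widetilde G$ be any $n$-fold Brylinski--Deligne cover associated with a Weyl-invariant quadratic form $Q$. If $n_{\alpha_1}=2n_{\alpha_4}$, then $$f_X(\Phi^\vee_+)=f_Y(\Phi_+)=\frac{1}{n_{\alpha_4}}[1,8]\cup\frac{1}{2n_{\alpha_4}}\{1,3,5,7,9,11\}.$$ If $n_\alpha$ is constant on $\alpha\in\Delta$, then $f_X(\Phi^\vee_+)=f_Y(\Phi_+)=\frac{1}{n_\alpha}[1,11]$.
   Context: $[a,b]$ denotes $\{a,\dots,b\}$. Notation: $\omega_\alpha$ fundamental weights, $\omega^\vee_\alpha$ fundamental coweights, $\rho^\vee=\sum_{\alpha\in\Delta}\omega_\alpha^\vee$. $B_Q(y,z)=Q(y+z)-Q(y)-Q(z)$, $Y_{Q,n}=\{y\in Y:B_Q(y,z)\in n\mathbf Z\ \forall z\in Y\}$, $n_\alpha=n/\gcd(n,Q(\alpha^\vee))$, and $\tilde n_\alpha$ ($\alpha\in\Phi$) defined by $\mathbf Z\alpha^\vee\cap Y_{Q,n}=\mathbf Z\tilde n_\alpha\alpha^\vee$ (for type $F_4$ one has $\tilde n_\alpha=n_\alpha$). $f_X:\Phi_+^\vee\to\mathbf Q$, $f_X(\beta^\vee)=\sum_{\alpha\in\Delta}\langle\omega_\alpha/\tilde n_\alpha,\beta^\vee\rangle$; $f_Y:\Phi_+\to\mathbf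 Q$, $f_Y(\beta)=\langle\rho^\vee,\beta\rangle/\tilde n_\beta$. *)

From mathcomp Require Import all_boot all_order all_algebra.
From Stdlib Require Import ClassicalEpsilon.
Set Implicit Arguments. Unset Strict Implicit. Unset Printing Implicit Defensive.
Import Order.TTheory GRing.Theory Num.Theory.
Local Open Scope ring_scope.

(* For F4 (simply connected = adjoint) the cocharacter lattice Y is the coroot
   lattice; we use coordinates w.r.t. the simple coroots a_1^v,...,a_4^v.
   Roots are written in coordinates w.r.t. the simple roots a_1,...,a_4;
   the character lattice X has the fundamental weights w_i as basis (dual). *)
Definition vec := 'I_4 -> int.

Definition vec_of (s : seq int) : vec := fun i => nth 0 s i.

(* twice the Gram matrix (a_i,a_j) with long roots of squared length 2:
   a1,a2 long, a3,a4 short, double bond between a2 and a3 *)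
Definition gram2 (i j : 'I_4) : int :=
  nth 0 (nth [::] [:: [:: 4; -2; 0; 0]; [:: -2; 4; -2; 0];
                      [:: 0; -2; 2; -1]; [:: 0; 0; -1; 2]] i) j.

(* 2 (b,b) for b written in simple-root coordinates: 4 if long, 2 if short *)
Definition nrm2 (b : vec) : int := \sum_(i < 4) \sum_(j < 4) b i * b j * gram2 i j.

(* Cartan pairing <a_j, a_i^v> = 2 (a_i,a_j)/(a_i,a_i) *)
Definition cartan (i j : 'I_4) : int := divz (2 * gram2 i j) (gram2 i i).

Definition pair_root (j : 'I_4) (y : vec) : int := \sum_(i < 4) y i * cartan i j.

Definition srefl (j : 'I_4) (y : vec) : vec :=
  fun i => y i - (if i == j then pair_root j y else 0).

(* the coroot b^v = 2 b/(b,b), in simple-coroot coordinates: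
   coefficient i is b_i (a_i,a_i)/(b,b) = b_i * gram2 i i / nrm2 b *)
Definition coroot (b : vec) : vec := fun i => divz (b i * gram2 i i) (nrm2 b).

Definition simple (i : 'I_4) : vec := fun k => (k == i)%:R.

Definition pos_roots : seq vec := map vec_of
  [:: [:: 1;0;0;0]; [:: 0;1;0;0]; [:: 0;0;1;0]; [:: 0;0;0;1];
      [:: 1;1;0;0]; [:: 0;1;1;0]; [:: 0;0;1;1];
      [:: 1;1;1;0]; [:: 0;1;2;0]; [:: 0;1;1;1];
      [:: 1;1;2;0]; [:: 1;1;1;1]; [:: 0;1;2;1];
      [:: 1;2;2;0]; [:: 1;1;2;1]; [:: 0;1;2;2];
      [:: 1;2;2;1]; [:: 1;1;2;2];
      [:: 1;2;3;1]; [:: 1;2;2;2];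
      [:: 1;2;3;2];
      [:: 1;2;4;2];
      [:: 1;3;4;2];
      [:: 2;3;4;2]].

Definition is_quadratic_form (Q : vec -> int) : Prop :=
  exists a : 'I_4 -> 'I_4 -> int,
    forall y, Q y = \sum_(i < 4) \sum_(j < 4 | (i <= j)%N) a i j * y i * y j.

(* Weyl invariance (W is generated by the simple reflections) *)
Definition weyl_invariant (Q : vec -> int) : Prop :=
  forall (j : 'I_4) (y : vec), Q (srefl j y) = Q y.

Definition BQ (Q : vec -> int) (y z : vec) : int := Q (fun i => y i + z i) - Q y - Q z.

Definition inYQn (Q : vec -> int) (n : nat) (y : vec) : Prop :=
  forall z : vec, (n%:Z %| BQ Q y z)%Z.

Definition n_root (Q : vec -> int) (n : nat) (b : vec) : nat :=
  (n %/ gcdn n `|Q (coroot b)|)%N.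

Definition decb (P : Prop) : bool :=
  if excluded_middle_informative P then true else false.

Definition tn_pred (Q : vec -> int) (n : nat) (b : vec) : pred nat :=
  fun k => decb ((0 < k)%N /\ inYQn Q n (fun i => k%:Z * coroot b i)).

(* \tilde n_b : the positive generator of Z b^v \cap Y_{Q,n}, i.e. the least
   k > 0 with k b^v in Y_{Q,n} (0 if there is none, which does not happen) *)
Definition tilde_n (Q : vec -> int) (n : nat) (b : vec) : nat :=
  match excluded_middle_informative (exists k, tn_pred Q n b k) with
  | left H => ex_minn H
  | right _ => 0%N
  end.

(* f_X(b^v) = sum_i <w_i / tilde n_{a_i}, b^v> *)
Definition fX (Q : vec -> int) (n : nat) (b : vec) : rat :=
  \sum_(i < 4) (coroot b i)%:~R / (tilde_n Q n (simple i))%:R.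

(* f_Y(b) = <rho^v, b> / tilde n_b ; <rho^v, b> is the height of b *)
Definition fY (Q : vec -> int) (n : nat) (b : vec) : rat :=
  (\sum_(i < 4) b i)%:~R / (tilde_n Q n b)%:R.

Definition target_mixed (m : nat) : seq rat :=
  [seq k%:R / m%:R | k <- iota 1 8] ++
  [seq (2 * k + 1)%:R / (2 * m)%:R | k <- iota 0 6].

Definition target_const (m : nat) : seq rat := [seq k%:R / m%:R | k <- iota 1 11].

From mathcomp Require Import all_boot all_order all_algebra.
From mathcomp Require Import zify ring.
From Stdlib Require Import ClassicalEpsilon.
Set Implicit Arguments.
Unset Strict Implicit.
Unset Printing Implicit Defensive.
Import Order.TTheory GRing.Theory Num.Theory.
Local Open Scope ring_scope.

(* A Weyl-invariant quadratic form on the coroot lattice Y of F4 is Q(a_1^v)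
   times the form [qF4], whose value on the coroot of a root b is 1 or 2
   according as b is long or short.  Consequently B_Q(b^v, y) = Q(b^v) <b, y>,
   and since <b, Y> = Z, m b^v lies in Y_{Q,n} exactly when n | m Q(b^v): so
   tilde n_b = n_b, and n_b only depends on the length of b.  Then f_X and f_Y
   are explicit in n_{a_1} and n_{a_4} on the 24 positive roots, and both
   identities reduce to comparing finite lists of integers. *)

Lemma dvdn_mul_divn_gcd (n m c : nat) :
  (0 < n)%N -> (n %| m * c)%N = (n %/ gcdn n c %| m)%N.
Proof.
move=> n_gt0; set g := gcdn n c.
have g_gt0 : (0 < g)%N by rewrite gcdn_gt0 n_gt0.
have nE : n = (n %/ g * g)%N by rewrite divnK // dvdn_gcdl.
have cE : c = (c %/ g * g)%N by rewrite divnK // dvdn_gcdr.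
have co : coprime (n %/ g) (c %/ g).
  by rewrite /coprime -(eqn_pmul2r g_gt0) mul1n muln_gcdl -nE -cE.
by rewrite {1}nE {1}cE mulnA dvdn_pmul2r // Gauss_dvdl.
Qed.

Lemma decb_equiv (P : Prop) (b : bool) : (P <-> b) -> decb P = b.
Proof.
move=> [Pb bP]; rewrite /decb; case: excluded_middle_informative => [/Pb -> // | nP].
by case: b Pb bP => // _ /(_ isT) /nP.
Qed.

Lemma eq_mem_all (T : eqType) (s1 s2 : seq T) :
  all (mem s2) s1 && all (mem s1) s2 -> s1 =i s2.
Proof. by case/andP=> /allP s12 /allP s21 x; apply/idP/idP => [/s12 | /s21]. Qed.

Lemma eq_map_all (T R : Type) (P : pred T) (f g : T -> R) (r : seq T) :
  all P r -> (forall x, P x -> f x = g x) -> map f r = map g r.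
Proof. by move=> + fg; elim: r => //= x r IHr /andP[Px Pr]; rewrite fg // IHr. Qed.

Lemma mem_map_div (T : Type) (r : seq T) (f : T -> rat) (num : T -> int) (d : rat)
    (L : seq int) :
  map f r = [seq (num x)%:~R / d | x <- r] -> map num r =i L ->
  map f r =i [seq x%:~R / d | x <- L].
Proof.
by move=> -> numL; rewrite (map_comp (fun x : int => x%:~R / d)); apply: eq_mem_map.
Qed.

Local Notation o0 := (@Ordinal 4 0 isT).
Local Notation o1 := (@Ordinal 4 1 isT).
Local Notation o2 := (@Ordinal 4 2 isT).
Local Notation o3 := (@Ordinal 4 3 isT).

Definition ords : seq 'I_4 := [:: o0; o1; o2; o3].

Lemma mem_ords (i : 'I_4) : i \in ords.
Proof. by case: i => -[|[|[|[|i]]]]. Qed.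

(* Makes sums over 'I_4 reducible, so that the finite checks below go through
   by [vm_compute]. *)
Lemma index_enum_ord4 : index_enum 'I_4 = ords.
Proof. by apply: (inj_map val_inj); rewrite /index_enum unlock -enumT val_enum_ord. Qed.

Lemma big_ord4 (R : nmodType) (F : 'I_4 -> R) :
  \sum_(i < 4) F i = F o0 + F o1 + F o2 + F o3.
Proof. by rewrite unlock index_enum_ord4 /= addr0 !addrA. Qed.

(* The W-invariant form on Y with value 1 on the coroots of the long roots. *)
Definition qF4 (y : vec) : int :=
  y o0 ^+ 2 + y o1 ^+ 2 + 2 * y o2 ^+ 2 + 2 * y o3 ^+ 2
  - y o0 * y o1 - 2 * y o1 * y o2 - 2 * y o2 * y o3.

Lemma quadratic_formE (Q : vec -> int) : is_quadratic_form Q ->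
  exists a : 'I_4 -> 'I_4 -> int, forall y : vec, Q y =
    a o0 o0 * y o0 * y o0 + a o1 o1 * y o1 * y o1 + a o2 o2 * y o2 * y o2
  + a o3 o3 * y o3 * y o3 + a o0 o1 * y o0 * y o1 + a o0 o2 * y o0 * y o2
  + a o0 o3 * y o0 * y o3 + a o1 o2 * y o1 * y o2 + a o1 o3 * y o1 * y o3
  + a o2 o3 * y o2 * y o3.
Proof. by move=> [a Qa]; exists a => y; rewrite Qa unlock index_enum_ord4 /=; ring. Qed.

Section WeylInvariantForm.

Context {Q : vec -> int}.
Hypotheses (Qquad : is_quadratic_form Q) (QW : weyl_invariant Q).

Lemma quadratic_form_ext (v w : vec) : v =1 w -> Q v = Q w.
Proof. by have [a Qa] := quadratic_formE Qquad; move=> vw; rewrite !Qa !vw. Qed.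

Lemma vec_of_ords (y : vec) : vec_of [seq y i | i <- ords] =1 y.
Proof. by move=> i; case: i => -[|[|[|[|i]]]] lti //; congr y; apply/val_inj. Qed.

(* The hypothesis spells out s_j (vec_of s), so that instances hold by [erefl]. *)
Lemma weyl_orbit j s t :
    let y := vec_of s in
    [seq y i - (if i == j then
                  y o0 * cartan o0 j + y o1 * cartan o1 j
                  + y o2 * cartan o2 j + y o3 * cartan o3 j
                else 0) | i <- ords] = t ->
  Q (vec_of t) = Q (vec_of s).
Proof.
move=> y <-; rewrite -(QW j y); apply: quadratic_form_ext => i.
by rewrite vec_of_ords /srefl /pair_root big_ord4.
Qed.

Lemma weyl_invariant_qF4 (y : vec) : Q y = Q (simple o0) * qF4 y.
Proof.
have [a Qa] := quadratic_formE Qquad.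
have coef : a o1 o1 = a o0 o0 /\ a o2 o2 = 2 * a o0 o0 /\ a o3 o3 = 2 * a o0 o0 /\
    a o0 o1 = - a o0 o0 /\ a o1 o2 = - 2 * a o0 o0 /\ a o2 o3 = - 2 * a o0 o0 /\
    a o0 o2 = 0 /\ a o0 o3 = 0 /\ a o1 o3 = 0.
  have e1 := @weyl_orbit o1 [:: 1; 0; 0; 0] [:: 1; 1; 0; 0] erefl.
  have e2 := @weyl_orbit o0 [:: 0; 1; 0; 0] [:: 1; 1; 0; 0] erefl.
  have e3 := @weyl_orbit o2 [:: 0; 1; 0; 0] [:: 0; 1; 1; 0] erefl.
  have e4 := @weyl_orbit o1 [:: 0; 0; 1; 0] [:: 0; 2; 1; 0] erefl.
  have e5 := @weyl_orbit o3 [:: 0; 0; 1; 0] [:: 0; 0; 1; 1] erefl.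
  have e6 := @weyl_orbit o2 [:: 0; 0; 0; 1] [:: 0; 0; 1; 1] erefl.
  have e7 := @weyl_orbit o0 [:: 1; 0; 1; 0] [:: -1; 0; 1; 0] erefl.
  have e8 := @weyl_orbit o0 [:: 1; 0; 0; 1] [:: -1; 0; 0; 1] erefl.
  have e9 := @weyl_orbit o1 [:: 0; 1; 0; 1] [:: 0; -1; 0; 1] erefl.
  rewrite !Qa /vec_of /= in e1 e2 e3 e4 e5 e6 e7 e8 e9.
  lia.
rewrite !Qa /simple /qF4 /=.
move: coef => [-> [-> [-> [-> [-> [-> [-> [-> ->]]]]]]]].
ring.
Qed.
End WeylInvariantForm.

(* The pairing of X and Y, in the bases (w_i) and (a_i^v). *)
Definition pairing (x y : vec) : int := \sum_(i < 4) x i * y i.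

Lemma pairing_simple (x : vec) (i : 'I_4) : pairing x (simple i) = x i.
Proof.
rewrite /pairing (bigD1 i) //= /simple eqxx mulr1 big1 ?addr0 // => j /negbTE ->.
by rewrite mulr0.
Qed.

(* B_qF4(y, -) as a character, in the basis (w_i). *)
Definition polar (y : vec) : vec :=
  vec_of [:: 2 * y o0 - y o1; - y o0 + 2 * y o1 - 2 * y o2;
             - 2 * y o1 + 4 * y o2 - 2 * y o3; - 2 * y o2 + 4 * y o3].

Lemma qF4_polar (y z : vec) :
  qF4 (fun i => y i + z i) - qF4 y - qF4 z = pairing (polar y) z.
Proof. by rewrite /pairing big_ord4 /qF4 /polar /vec_of /=; ring. Qed.

Lemma polarZ (m : int) (y z : vec) :
  pairing (polar (fun i => m * y i)) z = m * pairing (polar y) z.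
Proof. by rewrite /pairing !big_ord4 /polar /vec_of /=; ring. Qed.

(* The root b in the basis (w_i): its coordinates are the <b, a_i^v>. *)
Definition wcoord (b : vec) : vec := fun i => \sum_(j < 4) b j * cartan i j.

Definition root_facts (b : vec) : bool :=
  [&& all (fun i => polar (coroot b) i == qF4 (coroot b) * wcoord b i) ords,
      has (fun i => `|wcoord b i|%N == 1%N) ords
    & qF4 (coroot b) \in [:: 1; 2]].

Lemma root_facts_pos_roots : all root_facts pos_roots.
Proof. by rewrite /root_facts /coroot /wcoord /nrm2 index_enum_ord4 unlock; vm_compute. Qed.

Lemma root_facts_simple (i : 'I_4) : root_facts (simple i).
Proof.
have facts : all (fun k => root_facts (simple k)) ords.
  by rewrite /root_facts /coroot /wcoord /nrm2 index_enum_ord4 unlock; vm_compute.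
exact: allP facts i (mem_ords i).
Qed.

Lemma qF4_coroot_simple :
  [/\ qF4 (coroot (simple o0)) = 1, qF4 (coroot (simple o1)) = 1,
      qF4 (coroot (simple o2)) = 2 & qF4 (coroot (simple o3)) = 2].
Proof. by rewrite /coroot /nrm2 index_enum_ord4 unlock; vm_compute; split. Qed.

Section RootFacts.

Context {b : vec}.
Hypothesis b_facts : root_facts b.

Lemma polar_coroot (z : vec) :
  pairing (polar (coroot b)) z = qF4 (coroot b) * pairing (wcoord b) z.
Proof.
case/and3P: b_facts => /allP polarE _ _; rewrite /pairing mulr_sumr.
by apply: eq_bigr => i _; rewrite (eqP (polarE i (mem_ords i))) mulrA.
Qed.

Lemma wcoord_unit : exists i, `|wcoord b i|%N = 1%N.
Proof. by case/and3P: b_facts => _ /hasP[i _ /eqP wi] _; exists i. Qed.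

Lemma qF4_coroot_long_short : qF4 (coroot b) = 1 \/ qF4 (coroot b) = 2.
Proof. by case/and3P: b_facts => _ _; rewrite !inE => /orP[] /eqP ->; [left | right]. Qed.

End RootFacts.

Definition mixed_numerators : seq int :=
  [seq (2 * k)%N%:Z | k <- iota 1 8] ++ [seq (2 * k + 1)%N%:Z | k <- iota 0 6].

Definition const_numerators : seq int := [seq k%:Z | k <- iota 1 11].

Lemma target_mixedE (m : nat) : (0 < m)%N ->
  target_mixed m = [seq x%:~R / (2 * m)%:R | x <- mixed_numerators].
Proof.
move=> m_gt0; rewrite /target_mixed map_cat -!map_comp; congr (_ ++ _).
apply: eq_map => k /=; rewrite -[((2 * k)%N%:Z)%:~R]/((2 * k)%N%:R) !natrM.
by field; rewrite pnatr_eq0 -lt0n.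
Qed.

Lemma target_constE (m : nat) : target_const m = [seq x%:~R / m%:R | x <- const_numerators].
Proof. by rewrite /target_const -map_comp. Qed.

Lemma fX_numerators_mixed :
  [seq coroot b o0 + coroot b o1 + 2 * (coroot b o2 + coroot b o3) | b <- pos_roots]
    =i mixed_numerators.
Proof. by apply: eq_mem_all; rewrite /coroot /nrm2 index_enum_ord4 unlock; vm_compute. Qed.

Lemma fY_numerators_mixed :
  [seq qF4 (coroot b) * \sum_(i < 4) b i | b <- pos_roots] =i mixed_numerators.
Proof. by apply: eq_mem_all; rewrite /coroot /nrm2 index_enum_ord4 unlock; vm_compute. Qed.

Lemma fX_numerators_const :
  [seq coroot b o0 + coroot b o1 + (coroot b o2 + coroot b o3) | b <- pos_roots]
    =i const_numerators.
Proof. by apply: eq_mem_all; rewrite /coroot /nrm2 index_enum_ord4 unlock; vm_compute. Qed.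

Lemma fY_numerators_const : [seq \sum_(i < 4) b i | b <- pos_roots] =i const_numerators.
Proof. by apply: eq_mem_all; rewrite index_enum_ord4 unlock; vm_compute. Qed.

Section Cover.

Variables (Q : vec -> int) (n : nat).
Hypotheses (n_gt0 : (0 < n)%N) (Qquad : is_quadratic_form Q) (QW : weyl_invariant Q).

Let QE : forall y, Q y = Q (simple o0) * qF4 y := weyl_invariant_qF4 Qquad QW.

Lemma BQ_qF4 (y z : vec) : BQ Q y z = Q (simple o0) * pairing (polar y) z.
Proof.
by rewrite /BQ (QE (fun i => y i + z i)) (QE y) (QE z) -qF4_polar; ring.
Qed.

Lemma BQ_coroot (b : vec) (m : int) (z : vec) : root_facts b ->
  BQ Q (fun i => m * coroot b i) z = m * Q (coroot b) * pairing (wcoord b) z.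
Proof.
move=> b_facts; rewrite BQ_qF4 polarZ polar_coroot //.
by rewrite (QE (coroot b)); ring.
Qed.

Lemma inYQn_coroot (b : vec) (m : nat) : root_facts b ->
  inYQn Q n (fun i => m%:Z * coroot b i) <-> (n %| m * `|Q (coroot b)|)%N.
Proof.
move=> b_facts; have -> : (n %| m * `|Q (coroot b)|)%N = (n%:Z %| m%:Z * Q (coroot b))%Z.
  by rewrite dvdzE abszM.
split=> [inY | dvd_n z]; last by rewrite BQ_coroot //; apply: dvdz_mulr.
have [i wi] := wcoord_unit b_facts.
by move: (inY (simple i)); rewrite BQ_coroot // pairing_simple !dvdzE !abszM wi muln1.
Qed.

Lemma tilde_nE (b : vec) (N : nat) : (0 < N)%N ->
  (forall m, tn_pred Q n b m = (0 < m)%N && (N %| m)%N) -> tilde_n Q n b = N.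
Proof.
move=> N_gt0 tnE; rewrite /tilde_n; case: excluded_middle_informative => [ex|]; last first.
  by case; exists N; rewrite tnE N_gt0 dvdnn.
case: ex_minnP => m; rewrite tnE => /andP[m_gt0 Nm] minm.
by apply/eqP; rewrite eqn_leq (dvdn_leq m_gt0 Nm) andbT minm // tnE N_gt0 dvdnn.
Qed.

Lemma n_root_gt0 (b : vec) : (0 < n_root Q n b)%N.
Proof. by rewrite divn_gt0 ?gcdn_gt0 ?n_gt0 // dvdn_leq ?dvdn_gcdl. Qed.

Lemma tilde_n_coroot (b : vec) : root_facts b -> tilde_n Q n b = n_root Q n b.
Proof.
move=> b_facts; apply: tilde_nE (n_root_gt0 b) _ => m.
apply: decb_equiv; rewrite inYQn_coroot // dvdn_mul_divn_gcd //.
by split=> [[-> ->] | /andP[-> ->]].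
Qed.

Lemma n_root_qF4 (b b' : vec) :
  qF4 (coroot b) = qF4 (coroot b') -> n_root Q n b = n_root Q n b'.
Proof. by rewrite /n_root !(QE (coroot _)) => ->. Qed.

Local Notation n_long := (n_root Q n (simple o0)).
Local Notation n_short := (n_root Q n (simple o3)).

Lemma n_root_long_short (b : vec) : root_facts b ->
  n_root Q n b = if qF4 (coroot b) == 1 then n_long else n_short.
Proof.
have [q0 _ _ q3] := qF4_coroot_simple.
by move=> /qF4_coroot_long_short[] qb; rewrite qb /=; apply: n_root_qF4; rewrite qb ?q0 ?q3.
Qed.

Lemma fXE (b : vec) :
  fX Q n b = (coroot b o0 + coroot b o1)%:~R / n_long%:R
             + (coroot b o2 + coroot b o3)%:~R / n_short%:R.
Proof.
have [q0 q1 q2 q3] := qF4_coroot_simple.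
rewrite /fX big_ord4 !tilde_n_coroot ?root_facts_simple //.
rewrite (@n_root_qF4 (simple o1) (simple o0)) ?q0 ?q1 //.
rewrite (@n_root_qF4 (simple o2) (simple o3)) ?q2 ?q3 //.
by rewrite !intrD !mulrDl !addrA.
Qed.

Lemma fYE (b : vec) : root_facts b ->
  fY Q n b = (\sum_(i < 4) b i)%:~R / (if qF4 (coroot b) == 1 then n_long else n_short)%:R.
Proof. by move=> b_facts; rewrite /fY tilde_n_coroot // n_root_long_short. Qed.

Let n_short_neq0 : n_short%:R != 0 :> rat.
Proof. by rewrite pnatr_eq0 -lt0n n_root_gt0. Qed.

Lemma fX_mixed : n_long = (2 * n_short)%N ->
  [seq fX Q n b | b <- pos_roots] =i target_mixed n_short.
Proof.
move=> nE; rewrite target_mixedE ?n_root_gt0 //.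
apply: mem_map_div fX_numerators_mixed; apply: eq_map => b.
by rewrite fXE nE !intrD intrM natrM; field.
Qed.

Lemma fY_mixed : n_long = (2 * n_short)%N ->
  [seq fY Q n b | b <- pos_roots] =i target_mixed n_short.
Proof.
move=> nE; rewrite target_mixedE ?n_root_gt0 //.
apply: mem_map_div fY_numerators_mixed.
apply: (eq_map_all root_facts_pos_roots) => b b_facts.
rewrite fYE // nE; case: (qF4_coroot_long_short b_facts) => -> /=.
  by rewrite mul1r.
by rewrite intrM natrM; field.
Qed.

Lemma fX_const : n_long = n_short ->
  [seq fX Q n b | b <- pos_roots] =i target_const n_short.
Proof.
move=> nE; rewrite target_constE; apply: mem_map_div fX_numerators_const.
by apply: eq_map => b; rewrite fXE nE -mulrDl -intrD.
Qed.

Lemma fY_const : n_long = n_short ->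
  [seq fY Q n b | b <- pos_roots] =i target_const n_short.
Proof.
move=> nE; rewrite target_constE; apply: mem_map_div fY_numerators_const.
by apply: (eq_map_all root_facts_pos_roots) => b b_facts; rewrite fYE // nE if_same.
Qed.

End Cover.

Theorem lemma3p5 (Q : vec -> int) (n : nat) :
  (0 < n)%N -> is_quadratic_form Q -> weyl_invariant Q ->
  let na (i : nat) := n_root Q n (simple (inord i : 'I_4)) in
  (na 0%N = (2 * na 3)%N ->
     [seq fX Q n b | b <- pos_roots] =i target_mixed (na 3%N) /\
     [seq fY Q n b | b <- pos_roots] =i target_mixed (na 3%N)) /\
  ((forall i j : nat, (i < 4)%N -> (j < 4)%N -> na i = na j) ->
     [seq fX Q n b | b <- pos_roots] =i target_const (na 0%N) /\
     [seq fY Q n b | b <- pos_roots] =i target_const (na 0%N)).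
Proof.
move=> n_gt0 Qquad QW na.
have na0 : na 0%N = n_root Q n (simple o0) by rewrite /na (inord_val o0).
have na3 : na 3%N = n_root Q n (simple o3) by rewrite /na (inord_val o3).
split=> [nE | na_const].
  by rewrite na3; rewrite na0 na3 in nE; split; [exact: fX_mixed | exact: fY_mixed].
have nE : n_root Q n (simple o0) = n_root Q n (simple o3).
  by rewrite -na0 -na3; apply: na_const.
by rewrite na0 nE; split; [exact: fX_const | exact: fY_const].
Qed.
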